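(* Let $\Omega_S$ be the infinite square lattice graph, i.e. the graph with vertex set $\mathbb{Z}^2$ in which $(a,b)$ and $(c,d)$ are adjacent iff $|a-c|+|b-d|=1$. Then $\chi_{td}(\Omega_S) = 8$.
   Context: For a (possibly infinite) simple graph $G$ and a positive integer $k$, a proper $k$-total difference labeling of $G$ is a function $f: V(G)\to\{1,\dots,k\}$, extended to edges by $f(\{u,v\}) = |f(u)-f(v)|$, such that: (i) adjacent vertices receive different labels; (ii) two distinct edges sharing a vertex receive different labels; (iii) no edge receives the same label as either of its endpoints. $\chi_{td}(G)$ denotes the smallest $k$ for which $G$ has a proper $k$-total difference labeling. *)

From Stdlib Require Import ZArith.
Open Scope Z_scope.

Definition edge_label {V : Type} (f : V -> Z) (u v : V) : Z := Z.abs (f u - f v).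

Definition proper_total_difference_labeling {V : Type} (adj : V -> V -> Prop)
    (k : Z) (f : V -> Z) : Prop :=
  (forall v, 1 <= f v <= k) /\
  (forall u v, adj u v -> f u <> f v) /\
  (forall u v w, adj u v -> adj u w -> v <> w -> edge_label f u v <> edge_label f u w) /\
  (forall u v, adj u v -> edge_label f u v <> f u /\ edge_label f u v <> f v).

Definition has_ptdl {V : Type} (adj : V -> V -> Prop) (k : Z) : Prop :=
  exists f : V -> Z, proper_total_difference_labeling adj k f.

Definition chi_td_eq {V : Type} (adj : V -> V -> Prop) (k : Z) : Prop :=
  1 <= k /\ has_ptdl adj k /\ (forall j, 1 <= j -> has_ptdl adj j -> k <= j).

Definition square_lattice_adj (p q : Z * Z) : Prop :=
  Z.abs (fst p - fst q) + Z.abs (snd p - snd q) = 1.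

(* The map (x, y) |-> x + 2y sends the four neighbours of a lattice point to
   four distinct neighbours in the square of the path on Z, so a labeling of
   that graph pulls back; the 6-periodic labeling 1, 3, 7, 2, 6, 8 works.
   Conversely, with labels in 1..7 a vertex of degree 4 needs four distinct
   edge labels compatible with its own label: the labels 3 and 4 admit only
   three, and once they are excluded neither do 1, 2 and 6, and then neither
   do 5 and 7. *)

From Stdlib Require Import ZArith List Lia.
Import ListNotations.
Open Scope Z_scope.

Lemma has_ptdl_mono {V : Type} (adj : V -> V -> Prop) (j k : Z) :
  j <= k -> has_ptdl adj j -> has_ptdl adj k.
Proof.
  intros Hjk [f [Hrange Hf]]. exists f. split; [|exact Hf].
  intros v. specialize (Hrange v). lia.
Qed.

Definition locally_injective_hom {V W : Type} (adjV : V -> V -> Prop)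
    (adjW : W -> W -> Prop) (h : V -> W) : Prop :=
  (forall u v, adjV u v -> adjW (h u) (h v)) /\
  (forall u v w, adjV u v -> adjV u w -> h v = h w -> v = w).

Lemma ptdl_comp {V W : Type} (adjV : V -> V -> Prop) (adjW : W -> W -> Prop)
    (h : V -> W) (k : Z) (g : W -> Z) :
  locally_injective_hom adjV adjW h ->
  proper_total_difference_labeling adjW k g ->
  proper_total_difference_labeling adjV k (fun v => g (h v)).
Proof.
  intros [Hhom Hinj] [Hrange [Hvert [Hedge Hmixed]]].
  unfold proper_total_difference_labeling, edge_label in *.
  split; [|split; [|split]].
  - intros v. apply Hrange.
  - intros u v Huv. exact (Hvert _ _ (Hhom _ _ Huv)).
  - intros u v w Huv Huw Hvw.
    apply Hedge; [apply Hhom; assumption .. |].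
    intros E. exact (Hvw (Hinj _ _ _ Huv Huw E)).
  - intros u v Huv. exact (Hmixed _ _ (Hhom _ _ Huv)).
Qed.

Definition path_square_adj (s t : Z) : Prop := 1 <= Z.abs (s - t) <= 2.

Lemma path_square_adj_step (s t : Z) : path_square_adj s t ->
  exists d, In d [1; -1; 2; -2] /\ t = s + d.
Proof.
  unfold path_square_adj. intros H.
  exists (t - s). split; [simpl; lia | lia].
Qed.

Definition period6_label (t : Z) : Z :=
  match t mod 6 with 0 => 1 | 1 => 3 | 2 => 7 | 3 => 2 | 4 => 6 | _ => 8 end.

Lemma period6_label_residue (t d : Z) :
  period6_label (t + d) = period6_label (t mod 6 + d).
Proof. unfold period6_label. now rewrite Zplus_mod_idemp_l. Qed.

Lemma period6_label_local (s d d' : Z) :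
  In d [1; -1; 2; -2] -> In d' [1; -1; 2; -2] ->
  let c := period6_label s in
  let a := period6_label (s + d) in
  1 <= c <= 8 /\ c <> a /\ Z.abs (c - a) <> c /\ Z.abs (c - a) <> a /\
  (d <> d' -> Z.abs (c - a) <> Z.abs (c - period6_label (s + d'))).
Proof.
  intros Hd Hd'; cbv zeta.
  replace (period6_label s) with (period6_label (s + 0)) by now rewrite Z.add_0_r.
  rewrite !(period6_label_residue s).
  assert (Hr : In (s mod 6) [0; 1; 2; 3; 4; 5]).
  { pose proof (Z.mod_pos_bound s 6 ltac:(lia)). simpl. lia. }
  revert Hr. generalize (s mod 6) as r. intros r Hr. simpl in Hr, Hd, Hd'.
  repeat destruct Hr as [<- | Hr]; try contradiction;
  repeat destruct Hd as [<- | Hd]; try contradiction;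
  repeat destruct Hd' as [<- | Hd']; try contradiction;
  cbv [period6_label]; cbn -[Z.le]; lia.
Qed.

Lemma period6_label_ptdl :
  proper_total_difference_labeling path_square_adj 8 period6_label.
Proof.
  unfold proper_total_difference_labeling, edge_label.
  split; [|split; [|split]].
  - intros s. apply (period6_label_local s 1 1); simpl; auto.
  - intros s t Hst. destruct (path_square_adj_step s t Hst) as [d [Hd ->]].
    apply (period6_label_local s d d); assumption.
  - intros s t t' Hst Hst' Htt'.
    destruct (path_square_adj_step s t Hst) as [d [Hd ->]].
    destruct (path_square_adj_step s t' Hst') as [d' [Hd' ->]].
    apply (period6_label_local s d d'); [assumption .. |].
    intros ->. exact (Htt' eq_refl).
  - intros s t Hst. destruct (path_square_adj_step s t Hst) as [d [Hd ->]].
    pose proof (period6_label_local s d d Hd Hd) as H. simpl in H. tauto.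
Qed.

Definition diagonal_map (p : Z * Z) : Z := fst p + 2 * snd p.

Lemma diagonal_map_locally_injective :
  locally_injective_hom square_lattice_adj path_square_adj diagonal_map.
Proof.
  unfold locally_injective_hom, square_lattice_adj, path_square_adj, diagonal_map.
  split.
  - intros [a b] [c d]; cbn [fst snd]. lia.
  - intros [a b] [c d] [e g]; cbn [fst snd]. intros H1 H2 E. f_equal; lia.
Qed.

Lemma square_lattice_ptdl8 : has_ptdl square_lattice_adj 8.
Proof.
  exists (fun p => period6_label (diagonal_map p)).
  exact (ptdl_comp _ _ _ _ _ diagonal_map_locally_injective period6_label_ptdl).
Qed.

Definition has_min_degree {V : Type} (adj : V -> V -> Prop) (d : nat) : Prop :=
  forall u, exists l, NoDup l /\ (d <= length l)%nat /\ Forall (adj u) l.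

Definition label_range (k : Z) : list Z := map Z.of_nat (seq 1 (Z.to_nat k)).

Lemma in_label_range (k x : Z) : In x (label_range k) <-> 1 <= x <= k.
Proof.
  unfold label_range. rewrite in_map_iff. split.
  - intros [n [<- Hn]]. apply in_seq in Hn. lia.
  - intros Hx. exists (Z.to_nat x). rewrite in_seq. split; lia.
Qed.

Definition edge_compatible (c a : Z) : bool :=
  negb (a =? c) && negb (Z.abs (c - a) =? c) && negb (Z.abs (c - a) =? a).

Definition available_edge_labels (S : list Z) (c : Z) : list Z :=
  nodup Z.eq_dec (map (fun a => Z.abs (c - a)) (filter (edge_compatible c) S)).

Definition refine_labels (d : nat) (S : list Z) : list Z :=
  filter (fun c => (d <=? length (available_edge_labels S c))%nat) S.

Lemma NoDup_map_of_neq {A B : Type} (g : A -> B) (l : list A) :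
  (forall x y, In x l -> In y l -> x <> y -> g x <> g y) ->
  NoDup l -> NoDup (map g l).
Proof.
  intros Hg Hl. induction Hl as [|a l Ha Hl IH]; simpl; constructor.
  - rewrite in_map_iff. intros [b [E Hb]].
    apply (Hg b a); simpl; auto. intros ->. exact (Ha Hb).
  - apply IH. intros x y Hx Hy. apply Hg; simpl; auto.
Qed.

Section Refinement.

Variables (V : Type) (adj : V -> V -> Prop) (d : nat) (k : Z) (f : V -> Z).
Hypothesis (Hdeg : has_min_degree adj d).
Hypothesis (Hf : proper_total_difference_labeling adj k f).

Lemma edge_compatible_adj (u v : V) :
  adj u v -> edge_compatible (f u) (f v) = true.
Proof.
  destruct Hf as [_ [Hvert [_ Hmixed]]]. unfold edge_label in Hmixed.
  intros Huv. destruct (Hmixed u v Huv) as [H1 H2].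
  unfold edge_compatible.
  rewrite (proj2 (Z.eqb_neq _ _) (not_eq_sym (Hvert u v Huv))).
  rewrite (proj2 (Z.eqb_neq _ _) H1), (proj2 (Z.eqb_neq _ _) H2).
  reflexivity.
Qed.

Lemma labels_in_refine (S : list Z) :
  (forall v, In (f v) S) -> forall u, In (f u) (refine_labels d S).
Proof.
  intros HS u. destruct Hdeg with u as [l [Hl [Hlen Hadj]]].
  destruct Hf as [_ [_ [Hedge _]]].
  rewrite Forall_forall in Hadj.
  set (es := map (fun v => Z.abs (f u - f v)) l).
  assert (Hes : NoDup es).
  { apply NoDup_map_of_neq; [|exact Hl].
    intros v w Hv Hw. apply Hedge; auto. }
  assert (Hincl : incl es (available_edge_labels S (f u))).
  { intros e He. unfold es in He. apply in_map_iff in He as [v [<- Hv]].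
    apply nodup_In, (in_map (fun a => Z.abs (f u - a))), filter_In.
    split; [apply HS|].
    apply edge_compatible_adj, Hadj, Hv. }
  apply filter_In. split; [apply HS|].
  apply Nat.leb_le. apply NoDup_incl_length in Hincl; [|exact Hes].
  unfold es in Hincl. rewrite length_map in Hincl. lia.
Qed.

Lemma labels_in_iter_refine (n : nat) (u : V) :
  In (f u) (Nat.iter n (refine_labels d) (label_range k)).
Proof.
  revert u. induction n as [|n IH]; intros u; simpl.
  - apply in_label_range, (proj1 Hf).
  - exact (labels_in_refine _ IH u).
Qed.

End Refinement.

Lemma no_ptdl_of_iter_refine_nil {V : Type} (adj : V -> V -> Prop) (d n : nat)
    (k : Z) (v0 : V) :
  has_min_degree adj d ->
  Nat.iter n (refine_labels d) (label_range k) = [] ->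
  ~ has_ptdl adj k.
Proof.
  intros Hdeg Hnil [f Hf].
  pose proof (labels_in_iter_refine V adj d k f Hdeg Hf n v0) as H.
  rewrite Hnil in H. exact H.
Qed.

Lemma square_lattice_min_degree : has_min_degree square_lattice_adj 4.
Proof.
  intros [x y].
  exists [(x + 1, y); (x - 1, y); (x, y + 1); (x, y - 1)].
  split; [|split; [simpl; lia|]].
  - repeat constructor; simpl; intros H;
      repeat destruct H as [H|H]; try injection H; lia.
  - repeat constructor; unfold square_lattice_adj; simpl; lia.
Qed.

Lemma square_lattice_no_ptdl7 : ~ has_ptdl square_lattice_adj 7.
Proof.
  apply (no_ptdl_of_iter_refine_nil _ 4 3 7 (0, 0) square_lattice_min_degree).
  vm_compute. reflexivity.
Qed.

Theorem mainTheorem2 : chi_td_eq square_lattice_adj 8.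
Proof.
  split; [lia | split; [exact square_lattice_ptdl8 |]].
  intros j _ Hj. apply Z.nlt_ge. intros Hlt.
  apply square_lattice_no_ptdl7. exact (has_ptdl_mono _ j 7 ltac:(lia) Hj).
Qed.
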